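(* $\mathsf{UCQ}(\mathsf{BID})\subsetneq\mathsf{FO}(\mathsf{BID})$.
   Context: Fix a countably infinite universe $U$. A database schema is a finite nonempty set of relation symbols with arities; facts are $R(u_1,\dots,u_{\mathrm{ar}(R)})$ with $u_i\in U$; an instance is a finite set of facts; $\mathrm{adom}(D)$ is the set of elements of $U$ occurring in $D$. A probabilistic database (PDB) is a discrete probability space $(\mathbb D,P)$ with $\mathbb D$ a nonempty countable set of instances; $\mathrm{facts}(\mathcal D)$ is the union of its instances of positive probability. A PDB $\mathcal I$ is block-independent disjoint ($\mathsf{BID}$) if $\mathrm{facts}(\mathcal I)$ can be partitioned into blocks such that for facts $f_1,\dots,f_k$ from pairwise different blocks $\Pr(f_1\in I,\dots,f_k\in I)=\prod_i\Pr(f_i\in I)$, and distinct facts $f,f'$ of the same block satisfy $\Pr(f\in I\text{ and }f'\in I)=0$. First-order formulas use relational atoms $R(\bar u)$ ($\bar u$ variables or constants) and equality atoms and are evaluated under active domain semantics (quantifiers range over $\mathrm{adom}(D)$ and the formula's constants). A union of conjunctive queries (UCQ) is a formula built from atoms using only $\exists,\wedge,\vee$. An FO-view (UCQ-view) consists of one first-order (UCQ) formula $\Phi_R(x_1,\dots,x_{\mathrm{ar}(R)})$ per output relation $R$, mapping $D$ to the instance of all $R(\bar a)$ with $\bar a$ over $\mathrm{adom}(D)\cup\mathrm{adom}(\Phi_R)$ and $D\models\Phi_R[\bar a]$. The image of a PDB $(\mathbb D,P)$ under a view $V$ is the PDB on $V(\mathbb D)$ with $P'(\{D'\})=P(\{D:V(D)=D'\})$.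 $\mathsf{UCQ}(\mathsf{BID})$ and $\mathsf{FO}(\mathsf{BID})$ are the classes of images of BID-PDBs under UCQ-views and FO-views, respectively. *)

From Stdlib Require Rdefinitions.
From HB Require Import structures.
From mathcomp Require Import all_boot all_order all_algebra.
From mathcomp Require Import finmap.
From mathcomp Require Import boolp classical_sets reals constructive_ereal ereal esum.
From mathcomp Require Import Rstruct.

Set Implicit Arguments.
Unset Strict Implicit.
Unset Printing Implicit Defensive.

Import Order.TTheory GRing.Theory Num.Theory.

Local Open Scope classical_set_scope.

Local Open Scope ring_scope.

(* The countably infinite universe U is taken to be nat.               *)
(* A schema is a finite list of arities; relation symbol r is the      *)
(* index r < size S, with arity nth 0 S r.  (Nonemptiness is imposed   *)
(* where schemas are used.)                                            *)

Definition schema := seq nat.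
Definition arity (S : schema) (r : nat) : nat := nth 0%N S r.

(* a fact R(u_1,...,u_k) is the pair (R, [:: u_1; ...; u_k]) *)
Definition fact := (nat * seq nat)%type.
Definition instance := {fset fact}.

Definition fact_over (S : schema) (f : fact) : bool :=
  (f.1 < size S)%N && (size f.2 == arity S f.1).

Definition inst_over (S : schema) (D : instance) : Prop :=
  forall f, f \in D -> fact_over S f.

Definition adom (D : instance) : seq nat := flatten [seq f.2 | f <- enum_fset D].

Definition is_pdb (S : schema) (Dom : set instance) (P : instance -> Rdefinitions.R) : Prop :=
  [/\ (0 < size S)%N, Dom !=set0,
      (forall D, Dom D -> inst_over S D),
      (forall D, Dom D -> 0 <= P D)
    & (\esum_(D in Dom) (P D)%:E = 1)%E ].

Definition Pr (Dom : set instance) (P : instance -> Rdefinitions.R) (E : set instance) : Rdefinitions.R :=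
  fine (\esum_(D in Dom `&` E) (P D)%:E)%E.

Definition pdb_facts (Dom : set instance) (P : instance -> Rdefinitions.R) : set fact :=
  [set f | exists D, [/\ Dom D, 0 < P D & f \in D]].

(* Block-independent disjoint PDBs: facts(I) is partitioned into blocks,
   given by a labelling blk (two facts are in the same block iff they
   have the same label). *)
Definition is_BID (S : schema) (Dom : set instance) (P : instance -> Rdefinitions.R) : Prop :=
  is_pdb S Dom P /\
  exists blk : fact -> fact,
    (forall fs : seq fact,
        (forall f, f \in fs -> pdb_facts Dom P f) ->
        uniq (map blk fs) ->
        Pr Dom P [set D | all (fun f => f \in D) fs]
        = \prod_(f <- fs) Pr Dom P [set D | f \in D]) /\
    (forall f f', pdb_facts Dom P f -> pdb_facts Dom P f' -> f <> f' ->
        blk f = blk f' ->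
        Pr Dom P [set D | (f \in D) && (f' \in D)] = 0).

Inductive term := TVar of nat | TConst of nat.

Inductive formula :=
  | FRel of nat & seq term
  | FEq of term & term
  | FNot of formula
  | FAnd of formula & formula
  | FOr of formula & formula
  | FEx of nat & formula
  | FAll of nat & formula.

Fixpoint is_ucq (phi : formula) : bool :=
  match phi with
  | FRel _ _ | FEq _ _ => true
  | FNot _ | FAll _ _ => false
  | FAnd p q | FOr p q => is_ucq p && is_ucq q
  | FEx _ p => is_ucq p
  end.

Definition term_consts (t : term) : seq nat :=
  match t with TVar _ => [::] | TConst c => [:: c] end.

Fixpoint consts (phi : formula) : seq nat :=
  match phi with
  | FRel _ ts => flatten (map term_consts ts)
  | FEq t u => term_consts t ++ term_consts u
  | FNot p => consts p
  | FAnd p q | FOr p q => consts p ++ consts q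
  | FEx _ p | FAll _ p => consts p
  end.

Definition term_vars (t : term) : seq nat :=
  match t with TVar x => [:: x] | TConst _ => [::] end.

Fixpoint fv (phi : formula) : seq nat :=
  match phi with
  | FRel _ ts => flatten (map term_vars ts)
  | FEq t u => term_vars t ++ term_vars u
  | FNot p => fv p
  | FAnd p q | FOr p q => fv p ++ fv q
  | FEx x p | FAll x p => [seq y <- fv p | y != x]
  end.

Fixpoint wf_formula (S : schema) (phi : formula) : bool :=
  match phi with
  | FRel r ts => (r < size S)%N && (size ts == arity S r)
  | FEq _ _ => true
  | FNot p => wf_formula S p
  | FAnd p q | FOr p q => wf_formula S p && wf_formula S q
  | FEx _ p | FAll _ p => wf_formula S p
  end.

Definition eval_term (nu : nat -> nat) (t : term) : nat :=
  match t with TVar x => nu x | TConst c => c end.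

Definition upd (nu : nat -> nat) (x a : nat) : nat -> nat :=
  fun y => if y == x then a else nu y.

Fixpoint sat (dom : seq nat) (D : instance) (nu : nat -> nat) (phi : formula) : bool :=
  match phi with
  | FRel r ts => (r, map (eval_term nu) ts) \in D
  | FEq t u => eval_term nu t == eval_term nu u
  | FNot p => ~~ sat dom D nu p
  | FAnd p q => sat dom D nu p && sat dom D nu q
  | FOr p q => sat dom D nu p || sat dom D nu q
  | FEx x p => has (fun a => sat dom D (upd nu x a) p) dom
  | FAll x p => all (fun a => sat dom D (upd nu x a) p) dom
  end.

Fixpoint tuples (dom : seq nat) (n : nat) : seq (seq nat) :=
  match n with
  | 0 => [:: [::]]
  | n.+1 => [seq a :: t | a <- dom, t <- tuples dom n]
  end.

(* A view from S to S' is a list Phi of formulas, Phi_r = nth _ Phi r  *)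
(* for output relation r < size S', with free variables among          *)
(* x_0, ..., x_{ar(r)-1} (the head variables).                         *)

Definition dflt_formula : formula := FEq (TVar 0) (TVar 0).

Definition view_formula (Phi : seq formula) (r : nat) : formula :=
  nth dflt_formula Phi r.

Definition is_view (cls : formula -> bool) (S S' : schema) (Phi : seq formula) : Prop :=
  [/\ (0 < size S')%N, size Phi = size S' &
      forall r, (r < size S')%N ->
        [&& wf_formula S (view_formula Phi r),
            all (fun x => x < arity S' r)%N (fv (view_formula Phi r))
          & cls (view_formula Phi r)] ].

Definition FO_view := is_view (fun _ => true).
Definition UCQ_view := is_view is_ucq.

Definition view_facts (S' : schema) (Phi : seq formula) (D : instance) (r : nat) : seq fact :=
  let phi := view_formula Phi r in
  let dom := adom D ++ consts phi in
  [seq (r, a) | a <- tuples dom (arity S' r) & sat dom D (fun i => nth 0%N a i) phi].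

Definition apply_view (S' : schema) (Phi : seq formula) (D : instance) : instance :=
  [fset f | f in flatten [seq view_facts S' Phi D r | r <- iota 0 (size S')]]%fset.

Definition is_image (S' : schema) (Phi : seq formula)
    (Dom : set instance) (P : instance -> Rdefinitions.R)
    (Dom' : set instance) (P' : instance -> Rdefinitions.R) : Prop :=
  Dom' = apply_view S' Phi @` Dom /\
  forall D', Dom' D' ->
    P' D' = Pr Dom P [set D | apply_view S' Phi D = D'].

Definition in_class (cls : formula -> bool)
    (S' : schema) (Dom' : set instance) (P' : instance -> Rdefinitions.R) : Prop :=
  exists (S : schema) (Dom : set instance) (P : instance -> Rdefinitions.R) (Phi : seq formula),
    [/\ is_BID S Dom P, is_view cls S S' Phi & is_image S' Phi Dom P Dom' P'].

Definition UCQ_BID := in_class is_ucq.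
Definition FO_BID := in_class (fun _ => true).

(* A UCQ-view is monotone, and each of its output facts is witnessed by boundedly many
   input facts mentioning boundedly many elements. In a BID-PDB, given a positive world
   containing such a witness F and a positive world avoiding an element k not mentioned by
   F, independence across blocks yields a positive world that contains F and avoids k.
   Hence, in a PDB of UCQ(BID), every output fact of a positive world survives in some
   world from which a chosen element, taken outside a set of bounded size, has vanished.

   The counterexample starts from the tuple-independent PDB whose worlds are the graphs
   with edges j -> succ j for the bits j set in m, where m has probability 2^-(m+1) (the
   bits of such an m are independent) and succ runs through directed cycles of every
   length. The FO-view keeps a graph iff every source of an edge has an incoming edge.
   A world of the image containing one edge of a cycle contains the whole cycle, so one
   fact forces arbitrarily many elements, and the image is not in UCQ(BID). *)

From Stdlib Require Rdefinitions.
From HB Require Import structures.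
From mathcomp Require Import all_boot all_order all_algebra finmap zify lra.
From mathcomp Require Import boolp classical_sets cardinality fsbigop reals.
From mathcomp Require Import constructive_ereal ereal esum sequences Rstruct.

Set Implicit Arguments.
Unset Strict Implicit.
Unset Printing Implicit Defensive.

Import Order.TTheory GRing.Theory Num.Theory.

Local Notation R := Rdefinitions.R.

Lemma not_uniq_map (T1 T2 : eqType) (h : T1 -> T2) (s : seq T1) :
  uniq s -> ~~ uniq (map h s) ->
  exists x y, [/\ x \in s, y \in s, x <> y & h x = h y].
Proof.
move=> s_uniq; apply: contraNP => noeq; rewrite map_inj_in_uniq // => x y xs ys hxy.
by apply/not_notP => neq; apply: noeq; exists x, y.
Qed.

Lemma exists_notin (T : eqType) (s t : seq T) :
  uniq s -> size t < size s -> exists2 x, x \in s & x \notin t.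
Proof.
move=> s_uniq lt_ts; have [/allP st|/allPn[x sx xt]] := boolP (all (mem t) s).
  by move: (uniq_leq_size s_uniq st); rewrite leqNgt lt_ts.
by exists x.
Qed.

Section Views.
Local Open Scope fset_scope.

Lemma adomP (D : instance) x :
  reflect (exists2 f, f \in D & x \in f.2) (x \in adom D).
Proof. by apply: (iffP flatten_mapP) => -[f Df xf]; exists f. Qed.

Lemma adomS (D1 D2 : instance) :
  {subset D1 <= D2} -> {subset adom D1 <= adom D2}.
Proof. by move=> sD x /adomP[f /sD D2f xf]; apply/adomP; exists f. Qed.

Definition fact_at (D : instance) x : fact :=
  nth (0, [::]) (enum_fset D) (find (fun f : fact => x \in f.2) (enum_fset D)).

Lemma fact_atP (D : instance) x :
  x \in adom D -> fact_at D x \in D /\ x \in (fact_at D x).2.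
Proof.
move=> /adomP[f Df xf].
have hasx : has (fun f : fact => x \in f.2) (enum_fset D) by apply/hasP; exists f.
by split; [apply: mem_nth; rewrite -has_find | exact: (nth_find (0, [::]) hasx)].
Qed.

Lemma size_adom_fset (F : seq fact) k :
  (forall f, f \in F -> size f.2 <= k) -> size (adom [fset f in F]) <= size F * k.
Proof.
move=> Fk; rewrite /adom size_flatten /shape -map_comp.
have sFF : {subset enum_fset [fset f in F] <= F} by move=> f; rewrite in_fset.
apply: (@leq_trans (size (enum_fset [fset f in F]) * k)); last first.
  by rewrite leq_mul2r (uniq_leq_size (fset_uniq _) sFF) orbT.
elim: (enum_fset _) sFF => [|g s IHs] //= sgF.
rewrite mulSn leq_add ?Fk ?sgF ?mem_head // IHs // => f sf.
by rewrite sgF // inE sf orbT.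
Qed.

Lemma mem_tuples dom n a :
  (a \in tuples dom n) = (size a == n) && all (fun x => x \in dom) a.
Proof.
elim: n a => [|n IHn] [|x a] //=.
  by apply/allpairsPdep => -[y [t [_ _ //]]].
apply/allpairsPdep/idP => [[y [t [ydom + [-> ->]]]]|].
  by rewrite IHn eqSS ydom => /andP[-> ->].
by rewrite eqSS => /and3P[na xdom a_dom]; exists x, a; rewrite xdom IHn na a_dom.
Qed.

Lemma ucq_satS phi dom1 dom2 (D1 D2 : instance) nu :
  is_ucq phi -> {subset dom1 <= dom2} -> {subset D1 <= D2} ->
  sat dom1 D1 nu phi -> sat dom2 D2 nu phi.
Proof.
move=> + sdom sD; elim: phi nu => [r ts|t u|p IHp|p IHp q IHq|p IHp q IHq|x p IHp|x p IHp]
  //= nu.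
- by move=> _ /sD.
- by case/andP=> up uq /andP[/IHp-> // /IHq->].
- by case/andP=> up uq /orP[/IHp->|/IHq->]; rewrite ?orbT.
- by move=> up /hasP[a /sdom doma /IHp satp]; apply/hasP; exists a; last exact: satp.
Qed.

Fixpoint witness_size (phi : formula) : nat :=
  match phi with
  | FRel _ _ => 1
  | FEq _ _ => 0
  | FNot p => witness_size p
  | FAnd p q | FOr p q => witness_size p + witness_size q
  | FEx _ p | FAll _ p => (witness_size p).+1
  end.

Lemma ucq_sat_witness phi dom (D : instance) nu :
  is_ucq phi -> sat dom D nu phi ->
  exists (F : seq fact) (X : seq nat),
    [/\ {subset F <= D}, {subset X <= dom}, size F + size X <= witness_size phi &
      forall dom' (D' : instance), {subset X <= dom'} -> {subset F <= D'} ->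
        sat dom' D' nu phi].
Proof.
elim: phi nu => [r ts|t u|p IHp|p IHp q IHq|p IHp q IHq|x p IHp|x p IHp] //= nu.
- move=> _ HD; exists [:: (r, [seq eval_term nu i | i <- ts])], [::].
  split=> // [f|dom' D' _ sF]; first by rewrite inE => /eqP->.
  exact/sF/mem_head.
- by move=> _ Heq; exists [::], [::].
- case/andP=> up uq /andP[/(IHp _ up)[F1 [X1 [sF1 sX1 size1 sat1]]]].
  move=> /(IHq _ uq)[F2 [X2 [sF2 sX2 size2 sat2]]].
  exists (F1 ++ F2), (X1 ++ X2); split.
  + by move=> f; rewrite mem_cat => /orP[/sF1|/sF2].
  + by move=> y; rewrite mem_cat => /orP[/sX1|/sX2].
  + by rewrite !size_cat addnACA leq_add.
  + move=> dom' D' sX sF; rewrite sat1 ?sat2 // => y Xy;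
      (apply: sX || apply: sF); by rewrite mem_cat Xy ?orbT.
- case/andP=> up uq /orP[/(IHp _ up)|/(IHq _ uq)] [F [X [sF sX sizeFX satFX]]];
    exists F, X; split=> // [|dom' D' sX' sF'].
  + by rewrite (leq_trans sizeFX) ?leq_addr.
  + by rewrite satFX.
  + by rewrite (leq_trans sizeFX) ?leq_addl.
  + by rewrite satFX ?orbT.
- move=> up /hasP[a doma /(IHp _ up)[F [X [sF sX sizeFX satFX]]]].
  exists F, (a :: X); split=> //.
  + by move=> y; rewrite inE => /orP[/eqP->|/sX].
  + by rewrite /= addnS ltnS.
  + move=> dom' D' sX' sF'; apply/hasP; exists a; first exact/sX'/mem_head.
    by apply: satFX => // y Xy; apply: sX'; rewrite inE Xy orbT.
Qed.

Definition view_dom (Phi : seq formula) (D : instance) r :=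
  adom D ++ consts (view_formula Phi r).

Lemma apply_viewP S' Phi D f :
  reflect (exists r a, [/\ f = (r, a), r < size S',
             a \in tuples (view_dom Phi D r) (arity S' r) &
             sat (view_dom Phi D r) D (fun i => nth 0 a i) (view_formula Phi r)])
          (f \in apply_view S' Phi D).
Proof.
rewrite in_fset; apply: (iffP flatten_mapP) => [[r]|[r [a [-> ltr tup sata]]]].
  rewrite mem_iota add0n => /andP[_ ltr] /mapP[a].
  by rewrite mem_filter => /andP[sata tup] ->; exists r, a.
exists r; first by rewrite mem_iota add0n ltr.
by apply/mapP; exists a; rewrite // mem_filter sata tup.
Qed.

Lemma apply_view_elem S' Phi D f x :
  f \in apply_view S' Phi D -> x \in f.2 -> x \in view_dom Phi D f.1.
Proof.
case/apply_viewP=> r [a [-> _ + _]] /= xa.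
by rewrite mem_tuples => /andP[_ /allP]; apply.
Qed.

Section UCQView.
Variables (S' : schema) (Phi : seq formula).
Hypothesis Phi_ucq : forall r, r < size S' -> is_ucq (view_formula Phi r).

Lemma apply_viewS (D1 D2 : instance) :
  {subset D1 <= D2} -> {subset apply_view S' Phi D1 <= apply_view S' Phi D2}.
Proof.
move=> sD f /apply_viewP[r [a [-> ltr tup sata]]].
have sdom : {subset view_dom Phi D1 r <= view_dom Phi D2 r}.
  by move=> x; rewrite !mem_cat => /orP[/(adomS sD)->|->]; rewrite ?orbT.
apply/apply_viewP; exists r, a; split=> //; last exact: ucq_satS (Phi_ucq ltr) sdom sD sata.
by move: tup; rewrite !mem_tuples => /andP[-> /allP tup] /=; apply/allP => x /tup/sdom.
Qed.

Lemma apply_view_witness (D : instance) f :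
  f \in apply_view S' Phi D ->
  exists F : seq fact, [/\ {subset F <= D},
     size F <= witness_size (view_formula Phi f.1) + arity S' f.1 &
     f \in apply_view S' Phi [fset g in F]].
Proof.
case/apply_viewP=> r [a [-> ltr tup sata]] /=.
have [F [X [sF sX sizeFX satFX]]] := ucq_sat_witness (Phi_ucq ltr) sata.
have size_a : size a = arity S' r by move: tup; rewrite mem_tuples => /andP[/eqP].
(* One fact of [D] per element of [X ++ a] in [adom D] keeps that element in the domain. *)
pose F' := F ++ [seq fact_at D x | x <- X ++ a & x \in adom D].
have sdom x : x \in X ++ a -> x \in view_dom Phi D r ->
    x \in view_dom Phi [fset g in F'] r.
  rewrite !mem_cat; have [xD Xax _|_ Xax /= ->] := boolP (x \in adom D); last first.
    by rewrite orbT.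
  have [fD xf] := fact_atP xD; apply/orP; left; apply/adomP; exists (fact_at D x) => //.
  rewrite in_fset mem_cat; apply/orP; right.
  by apply/mapP; exists x; rewrite // mem_filter xD mem_cat.
exists F'; split.
- move=> g; rewrite mem_cat => /orP[/sF//|/mapP[x]].
  by rewrite mem_filter => /andP[xD _] ->; case: (fact_atP xD).
- rewrite size_cat size_map -size_a (@leq_trans (size F + (size X + size a))) //.
    by rewrite leq_add2l size_filter (leq_trans (count_size _ _)) // size_cat.
  by rewrite addnA leq_add2r.
- apply/apply_viewP; exists r, a; split=> //.
  + move: tup; rewrite !mem_tuples => /andP[-> /allP tup] /=; apply/allP => x ax.
    by apply: sdom; [rewrite mem_cat ax orbT | exact: tup].
  + apply: satFX => [x Xx|g Fg]; last by rewrite in_fset mem_cat Fg.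
    by apply: sdom; [rewrite mem_cat Xx | exact: sX].
Qed.

End UCQView.

End Views.

Section Probability.
Local Open Scope classical_set_scope.
Local Open Scope ring_scope.

Lemma esumZl_nat (A : set nat) (c : R) (f : nat -> R) : 0 <= c -> (forall m, 0 <= f m) ->
  (\esum_(m in A) (c * f m)%:E = c%:E * \esum_(m in A) (f m)%:E)%E.
Proof.
move=> c_ge0 f_ge0; rewrite esum_mkcond [in RHS]esum_mkcond.
rewrite -!nneseries_esumT; try by move=> n; case: ifP; rewrite // lee_fin ?mulr_ge0.
rewrite -nneseriesZl; last by move=> n _; case: ifP; rewrite // lee_fin.
by apply: eq_eseriesr => k _; case: ifP; rewrite ?mule0.
Qed.

(* [Pr] is [prob] at [T := instance]. *)
Definition prob (T : choiceType) (Dom : set T) (p : T -> R) (A : set T) : R :=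
  fine (\esum_(x in Dom `&` A) (p x)%:E)%E.

Section ProbabilityMass.
Variables (T : choiceType) (Dom : set T) (p : T -> R).
Hypothesis p_ge0 : forall x, Dom x -> 0 <= p x.
Hypothesis p_sum1 : (\esum_(x in Dom) (p x)%:E = 1)%E.

Local Notation mass A := (\esum_(x in Dom `&` A) (p x)%:E)%E.
Local Notation pr := (prob Dom p).

Let mass_ge0 A : (0 <= mass A)%E.
Proof. by apply: esum_ge0 => x [Domx _]; rewrite lee_fin p_ge0. Qed.

Let mass_split A X : mass A = (mass (A `&` X) + mass (A `&` ~` X))%E.
Proof. by rewrite (esumID X) ?setIA // => x [Domx _]; rewrite lee_fin p_ge0. Qed.

Lemma esum_prob A : mass A = (pr A)%:E.
Proof.
have mass_le1 : (mass A <= 1)%E.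
  have <- : mass setT = 1%E by rewrite setIT.
  by rewrite (mass_split setT A) setTI leeDl ?mass_ge0.
by rewrite /prob fineK // ge0_fin_numE // (le_lt_trans mass_le1) ?ltey.
Qed.

Lemma prob_ge0 A : 0 <= pr A.
Proof. by rewrite -lee_fin -esum_prob. Qed.

Lemma prob_setT : pr setT = 1.
Proof. by rewrite /prob setIT p_sum1. Qed.

Lemma prob_split A X : pr A = pr (A `&` X) + pr (A `&` ~` X).
Proof. by apply/EFin_inj; rewrite EFinD -!esum_prob (mass_split A X). Qed.

Lemma prob_ext A B : (forall x, Dom x -> (A x <-> B x)) -> pr A = pr B.
Proof.
move=> AB; rewrite /prob; congr (fine (esum _ _)).
by apply/seteqP; split=> x [Domx Ax]; split=> //; apply/AB.
Qed.

Lemma prob_le A B : (forall x, Dom x -> A x -> B x) -> pr A <= pr B.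
Proof.
move=> AB; rewrite (prob_split B A) (@prob_ext (B `&` A) A) ?lerDl ?prob_ge0 //.
by move=> x Domx; split=> [[]//|Ax]; split=> //; apply: AB.
Qed.

Lemma sum_le_prob A (X : seq T) : uniq X -> (forall x, x \in X -> Dom x /\ A x) ->
  \sum_(x <- X) p x <= pr A.
Proof.
move=> X_uniq XA; rewrite -lee_fin -esum_prob -sumEFin fsbig_seq //.
by apply: esum_ge; exists [set` X].
Qed.

Lemma mass_le_prob A x : Dom x -> A x -> p x <= pr A.
Proof.
move=> Domx Ax; have := @sum_le_prob A [:: x] isT.
by rewrite big_seq1; apply=> y; rewrite inE => /eqP->.
Qed.

Lemma prob_add_sum_le A B (X : seq T) : (forall x, Dom x -> B x -> A x) ->
  uniq X -> (forall x, x \in X -> [/\ Dom x, A x & ~ B x]) ->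
  pr B + \sum_(x <- X) p x <= pr A.
Proof.
move=> BA X_uniq XAB; rewrite (prob_split A B) (@prob_ext (A `&` B) B); last first.
  by move=> x Domx; split=> [[]//|Bx]; split=> //; apply: BA.
by rewrite lerD2l sum_le_prob // => x /XAB[].
Qed.

Lemma prob_gt0 A : 0 < pr A -> exists x, [/\ Dom x, A x & 0 < p x].
Proof.
apply: contraPP => /forallNP nopos; rewrite -lte_fin -esum_prob esum1 ?ltxx //.
move=> x [Domx Ax]; apply/eqP; rewrite eqe eq_le p_ge0 // andbT leNgt.
by apply/negP => px_gt0; apply: (nopos x).
Qed.

Lemma prob_approx A eps : 0 < eps -> exists X : seq T,
  [/\ uniq X, (forall x, x \in X -> [/\ Dom x, A x & 0 < p x]) &
      pr A - eps < \sum_(x <- X) p x].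
Proof.
move=> eps_gt0; have : ((pr A - eps)%:E < mass A)%E.
  by rewrite esum_prob lte_fin ltrBlDr ltrDl.
case/ereal_sup_gt=> _ [Y [finY YA] <-]; rewrite fsbig_finite // sumEFin lte_fin.
have nonpos0 : \sum_(x <- fset_set Y | ~~ (0 < p x)) p x = 0.
  rewrite big_seq_cond big1 // => x /andP[]; rewrite in_fset_set // inE.
  move=> /YA[Domx _] px_le0; apply/eqP; rewrite eq_le p_ge0 // andbT.
  by rewrite leNgt.
rewrite (bigID (fun x => 0 < p x)) /= nonpos0 addr0 => lt_sum.
exists [seq x <- fset_set Y | 0 < p x]; split; rewrite ?big_filter //.
  by rewrite filter_uniq // fset_uniq.
move=> x; rewrite mem_filter => /andP[px_gt0]; rewrite in_fset_set // inE.
by case/YA.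
Qed.

End ProbabilityMass.

Lemma pdb_ge0 S (Dom : set instance) P : is_pdb S Dom P -> forall D, Dom D -> 0 <= P D.
Proof. by case. Qed.

Lemma pdb_sum1 S (Dom : set instance) P :
  is_pdb S Dom P -> (\esum_(D in Dom) (P D)%:E = 1)%E.
Proof. by case. Qed.

Definition facts_event (F G : seq fact) : set instance :=
  [set D : instance | all (fun f => f \in D) F && all (fun g => g \notin D) G].

Lemma eq_facts_event F1 F2 G1 G2 :
  F1 =i F2 -> G1 =i G2 -> facts_event F1 G1 = facts_event F2 G2.
Proof.
move=> eF eG; apply/seteqP; split=> D;
  by rewrite /facts_event /= (eq_all_r eF) (eq_all_r eG).
Qed.

Section BID.
Variables (S : schema) (Dom : set instance) (P : instance -> R) (blk : fact -> fact).
Hypothesis P_pdb : is_pdb S Dom P.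
Hypothesis P_indep : forall F : seq fact,
  (forall f, f \in F -> pdb_facts Dom P f) -> uniq (map blk F) ->
  prob Dom P [set D | all (fun f => f \in D) F]
  = \prod_(f <- F) prob Dom P [set D | f \in D].
Hypothesis P_disj : forall f f', pdb_facts Dom P f -> pdb_facts Dom P f' -> f <> f' ->
  blk f = blk f' -> prob Dom P [set D | (f \in D) && (f' \in D)] = 0.

Local Notation pr := (prob Dom P).

Let P_ge0 := pdb_ge0 P_pdb.
Let P_sum1 := pdb_sum1 P_pdb.

Lemma world_blk_inj D : Dom D -> 0 < P D -> {in D &, injective blk}.
Proof.
move=> DomD PD_gt0 f f' Df Df' eqb; apply/not_notP => neq.
have PD g : g \in D -> pdb_facts Dom P g by exists D.
have : P D <= pr [set D' | (f \in D') && (f' \in D')].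
  by apply: (mass_le_prob P_ge0 P_sum1); rewrite //= Df Df'.
by rewrite (P_disj (PD f Df) (PD f' Df') neq eqb) leNgt PD_gt0.
Qed.

Lemma blk_notin_world D F g : Dom D -> 0 < P D -> {subset F <= D} ->
  g \in D -> g \notin F -> blk g \notin map blk F.
Proof.
move=> DomD PD_gt0 FD Dg; apply: contra => /mapP[f Ff eqb].
by rewrite (world_blk_inj DomD PD_gt0 Dg (FD f Ff) eqb).
Qed.

Lemma prob_conflict0 (E : set instance) f f' :
  pdb_facts Dom P f -> pdb_facts Dom P f' -> f <> f' -> blk f = blk f' ->
  (forall D, Dom D -> E D -> (f \in D) && (f' \in D)) -> pr E = 0.
Proof.
move=> Pf Pf' neq eqb Eff'; apply/eqP; rewrite eq_le prob_ge0 // andbT.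
by rewrite -(P_disj Pf Pf' neq eqb); apply: prob_le.
Qed.

Lemma prob_present_indep F b :
  (forall f, f \in F -> pdb_facts Dom P f) -> {in F &, injective blk} ->
  (forall g, g \in b -> pdb_facts Dom P g /\ blk g \notin map blk F) ->
  pr (facts_event (F ++ b) [::]) = pr (facts_event F [::]) * pr (facts_event b [::]).
Proof.
wlog /andP[F_uniq b_uniq] : F b / uniq F && uniq b => [hwlog PF F_inj Pb|PF F_inj Pb].
  have eFb : F ++ b =i undup F ++ undup b by move=> f; rewrite !mem_cat !mem_undup.
  rewrite (eq_facts_event eFb (frefl _)) -(eq_facts_event (mem_undup F) (frefl _)).
  rewrite -(eq_facts_event (mem_undup b) (frefl _)) hwlog ?undup_uniq //.
  - by move=> f; rewrite mem_undup; apply: PF.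
  - by move=> f f'; rewrite !mem_undup; apply: F_inj.
  - by move=> g; rewrite mem_undup (eq_mem_map blk (mem_undup F)); apply: Pb.
have allE F' : facts_event F' [::] = [set D | all (fun f => f \in D) F'].
  by apply/seteqP; split=> D; rewrite /facts_event /= andbT.
have [b_blk_uniq|] := boolP (uniq (map blk b)).
  have F_blk_uniq : uniq (map blk F) by rewrite map_inj_in_uniq.
  rewrite !allE !P_indep ?big_cat // => [f /Pb[]//|f|].
    by rewrite mem_cat => /orP[/PF|/Pb[]].
  rewrite map_cat cat_uniq F_blk_uniq b_blk_uniq andbT /=.
  by apply/hasPn => _ /mapP[f /Pb[_ fF] ->].
case/(not_uniq_map b_uniq)=> f [f' [bf bf' neq eqb]].
have [[Pf _] [Pf' _]] := (Pb f bf, Pb f' bf').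
have conflict F' : {subset b <= F'} -> pr (facts_event F' [::]) = 0.
  move=> sbF; apply: (@prob_conflict0 _ f f') => // D _ /andP[/allP DF' _].
  by rewrite !DF' ?sbF.
rewrite (conflict (F ++ b)) ?(conflict b) ?mulr0 // => g bg.
by rewrite mem_cat bg orbT.
Qed.

Lemma prob_absent_cons F G g :
  pr (facts_event F (g :: G)) = pr (facts_event F G) - pr (facts_event (g :: F) G).
Proof.
have [e_in e_out] : pr (facts_event F G `&` [set D | g \in D]) = pr (facts_event (g :: F) G)
    /\ pr (facts_event F G `&` ~` [set D | g \in D]) = pr (facts_event F (g :: G)).
  split; apply: prob_ext => D _; rewrite /facts_event /setC /=;
  by case: (g \in D) (all _ F) (all _ G) => [] [] []; split=> [[]|].
rewrite (prob_split P_ge0 P_sum1 (facts_event F G) [set D | g \in D]).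
by rewrite e_in e_out addrC addKr.
Qed.

Lemma prob_facts_event_indep F b G :
  (forall f, f \in F -> pdb_facts Dom P f) -> {in F &, injective blk} ->
  (forall g, g \in b ++ G -> pdb_facts Dom P g /\ blk g \notin map blk F) ->
  pr (facts_event (F ++ b) G) = pr (facts_event F [::]) * pr (facts_event b G).
Proof.
move=> PF F_inj; elim: G b => [|g G IHG] b PbG.
  by apply: prob_present_indep => // f fb; apply: PbG; rewrite cats0.
have eFgb : g :: F ++ b =i F ++ g :: b.
  by move=> f; rewrite !(inE, mem_cat) orbCA.
have sbG : {subset b ++ G <= b ++ g :: G}.
  by move=> f; rewrite !(inE, mem_cat) => /orP[]->; rewrite ?orbT.
have sgbG : {subset (g :: b) ++ G <= b ++ g :: G}.
  by move=> f; rewrite !(inE, mem_cat) => /orP[/orP[]|]->; rewrite ?orbT.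
rewrite !prob_absent_cons (eq_facts_event eFgb (frefl _)) IHG ?(IHG (g :: b)) ?mulrBr //.
  by move=> f /sgbG/PbG.
by move=> f /sbG/PbG.
Qed.

Lemma exists_world_avoiding (F : seq fact) D0 W0 k :
  Dom D0 -> 0 < P D0 -> {subset F <= D0} ->
  Dom W0 -> 0 < P W0 -> k \notin adom W0 ->
  (forall f, f \in F -> k \notin f.2) ->
  exists W, [/\ Dom W, 0 < P W, {subset F <= W} & k \notin adom W].
Proof.
move=> DomD0 PD0 FD0 DomW0 PW0 kW0 kF; apply/not_existsP => noW.
have W_k W : Dom W -> 0 < P W -> facts_event F [::] W -> k \in adom W.
  move=> DomW PW; rewrite /facts_event /= andbT => /allP FW.
  by apply/negPn/negP => kW; apply: (noW W).
have PF f : f \in F -> pdb_facts Dom P f by move=> /FD0 D0f; exists D0.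
have F_inj : {in F &, injective blk} by move=> f f' /FD0 + /FD0; apply: world_blk_inj.
set pF := pr (facts_event F [::]).
have pF_ge : P D0 <= pF.
  by apply: mass_le_prob => //; rewrite /facts_event /= andbT; apply/allP.
have c_gt0 : 0 < pF * P W0 by rewrite mulr_gt0 // (lt_le_trans PD0 pF_ge).
(* The finitely many worlds [X] carry all but [pF * P W0] of the mass of [F], and [G]
   holds one fact mentioning [k] from each of them. By independence the event "[F], and
   no fact of [G]" has mass at least [pF * P W0], while by the choice of [X] it has less. *)
have [X [X_uniq XF ltX]] := prob_approx P_ge0 P_sum1 (facts_event F [::]) c_gt0.
have X_k W : W \in X -> fact_at W k \in W /\ k \in (fact_at W k).2.
  by case/XF=> DomW FW PW; apply/fact_atP/W_k.
pose G := [seq fact_at W k | W <- X].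
have PG g : g \in [::] ++ G -> pdb_facts Dom P g /\ blk g \notin map blk F.
  case/mapP=> W XW ->; have [DomW FW PW] := XF W XW; have [Wg kg] := X_k W XW.
  split; first by exists W.
  move: FW; rewrite /facts_event /= andbT => /allP FW.
  by apply: (blk_notin_world DomW PW FW Wg); apply: contraL kg; apply: kF.
have lower : pF * P W0 <= pr (facts_event F G).
  have := prob_facts_event_indep PF F_inj PG; rewrite cats0 => ->.
  rewrite ler_wpM2l ?prob_ge0 //; apply: mass_le_prob => //.
  rewrite /facts_event /=; apply/allP => _ /mapP[W XW ->]; apply: contra kW0 => W0g.
  by apply/adomP; exists (fact_at W k); last by case: (X_k W XW).
have upper : pr (facts_event F G) + \sum_(W <- X) P W <= pF.
  apply: prob_add_sum_le => // [D _ /andP[FD _]|W XW]; first by rewrite /facts_event /= FD.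
  have [DomW FW _] := XF W XW; split=> // /andP[_ /allP GW].
  by have := GW _ (map_f (fun W => fact_at W k) XW); case: (X_k W XW) => ->.
by move: ltX lower upper; rewrite -/pF; lra.
Qed.

End BID.

Lemma ucq_view_BID_avoid S S' (Dom : set instance) P Phi r :
  is_BID S Dom P -> (forall r, (r < size S')%N -> is_ucq (view_formula Phi r)) ->
  exists N, forall D a (L : seq nat), Dom D -> 0 < P D ->
    (r, a) \in apply_view S' Phi D -> uniq L -> (N < size L)%N ->
    exists2 k, k \in L & exists W, [/\ Dom W, 0 < P W,
      (r, a) \in apply_view S' Phi W &
      forall b, (r, b) \in apply_view S' Phi W -> k \notin b].
Proof.
move=> [P_pdb [blk [P_indep P_disj]]] Phi_ucq.
have [P_ge0 P_sum1] := (pdb_ge0 P_pdb, pdb_sum1 P_pdb).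
have [W0 [DomW0 _ PW0]] : exists W0, [/\ Dom W0, setT W0 & 0 < P W0].
  by apply: (prob_gt0 P_ge0 P_sum1); rewrite (prob_setT P_sum1).
pose K := \max_(n <- S) n.
pose phi := view_formula Phi r.
exists (size (consts phi) + size (adom W0) + (witness_size phi + arity S' r) * K)%N.
move=> D a L DomD PD Dra L_uniq lt_L.
have [F [FD size_F raF]] := apply_view_witness Phi_ucq Dra.
have size_adom_F :
    (size (adom [fset f in F]%fset) <= (witness_size phi + arity S' r) * K)%N.
  apply: (@leq_trans (size F * K)); last by rewrite leq_mul2r size_F orbT.
  apply: size_adom_fset => f /FD Df.
  case: P_pdb => _ _ D_over _ _; case/andP: (D_over D DomD f Df) => lt_f /eqP->.
  exact: leq_bigmax_seq (mem_nth 0 lt_f) _.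
pose Z := consts phi ++ adom W0 ++ adom [fset f in F]%fset.
have lt_Z : (size Z < size L)%N.
  by rewrite !size_cat addnA (leq_ltn_trans _ lt_L) // leq_add2l.
have [k Lk] := exists_notin L_uniq lt_Z.
rewrite !mem_cat !negb_or => /and3P[kphi kW0 kF].
exists k => //.
have kF' f : f \in F -> k \notin f.2.
  by move=> Ff; apply: contra kF => kf; apply/adomP; exists f; rewrite ?in_fset.
have [W [DomW PW FW kW]] :=
  exists_world_avoiding P_pdb P_indep P_disj DomD PD FD DomW0 PW0 kW0 kF'.
exists W; split=> // [|b Wrb].
  by apply: (apply_viewS Phi_ucq _ raF) => f /[!in_fset] /FW.
apply/negP => kb; have := apply_view_elem Wrb kb.
by rewrite mem_cat (negPf kW) (negPf kphi).
Qed.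

End Probability.

Fixpoint bit (i m : nat) : bool := if i is i'.+1 then bit i' m./2 else odd m.

Lemma bit_small j m : m < 2 ^ j -> bit j m = false.
Proof.
elim: j m => [|j IHj] m /=; first by case: m.
by move=> lt_m; apply: IHj; move: lt_m; rewrite expnS -divn2; lia.
Qed.

Lemma bit_lt j m : bit j m -> j < m.
Proof.
apply: contraTT; rewrite -leqNgt => le_mj; rewrite bit_small //.
by rewrite (leq_trans (ltn_expl m (ltnSn 1))) // leq_pexp2l.
Qed.

Lemma bitD_pow j m i : ~~ bit j m -> bit i (m + 2 ^ j) = (i == j) || bit i m.
Proof.
elim: j m i => [|j IHj] m [|i] /= bjm.
- by rewrite addn1 /= (negPf bjm).
- congr bit; rewrite -!divn2; have := odd_double_half m; rewrite (negPf bjm); lia.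
- by rewrite oddD oddX /= addbF.
- rewrite -IHj //; congr bit; rewrite expnS -!divn2; have := odd_double_half m; lia.
Qed.

Lemma bit_set_pow j m : bit j m -> exists2 m', m = m' + 2 ^ j & ~~ bit j m'.
Proof.
elim: j m => [|j IHj] m /= bjm.
  by case: m bjm => //= m bjm; exists m; rewrite ?addn1.
have [m' def_m bjm'] := IHj _ bjm; exists (odd m + m'.*2).
  by have := odd_double_half m; rewrite def_m expnS; lia.
by rewrite /= -divn2 (_ : (odd m + m'.*2) %/ 2 = m') //; case: (odd m); lia.
Qed.

Lemma bit_inj m m' : (forall j, bit j m = bit j m') -> m = m'.
Proof.
have [n [le_m le_m']] : exists n, m < 2 ^ n /\ m' < 2 ^ n.
  by exists (maxn m m'); rewrite !(leq_trans (ltn_expl _ (ltnSn 1))) // leq_pexp2l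
    ?leq_maxl ?leq_maxr.
elim: n m m' le_m le_m' => [|n IHn] m m'; first by rewrite !ltnS !leqn0 => /eqP-> /eqP->.
move=> lt_m lt_m' eq_bits.
have eq_half : m./2 = m'./2.
  apply: IHn => [||j]; last exact: eq_bits j.+1.
  - by move: lt_m; rewrite expnS -divn2; lia.
  - by move: lt_m'; rewrite expnS -divn2; lia.
by rewrite -(odd_double_half m) -(odd_double_half m') eq_half (eq_bits 0 : odd m = odd m').
Qed.

Lemma bit_sum_pow (L : seq nat) i : uniq L -> bit i (\sum_(j <- L) 2 ^ j) = (i \in L).
Proof.
elim: L i => [|j L IHL] i /=; first by rewrite big_nil bit_small // expn_gt0.
by case/andP=> jL L_uniq; rewrite big_cons addnC bitD_pow ?IHL ?inE.
Qed.

(* [cell n i], for [i <= n], is the [i]-th vertex of a directed cycle of length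
   [n + 1]; [cell_succ] follows the cycles and fixes every number encoding no vertex. *)
Definition cell (n i : nat) : nat := CodeSeq.code [:: n; i].

Definition cell_succ (j : nat) : nat :=
  if CodeSeq.decode j is [:: n; i] then
    if i <= n then cell n (i.+1 %% n.+1) else j
  else j.

Definition cell_pred (n i : nat) : nat := if i is i'.+1 then i' else n.

Lemma cell_inj n i n' i' : cell n i = cell n' i' -> n = n' /\ i = i'.
Proof. by move=> /(can_inj CodeSeq.codeK) [-> ->]. Qed.

Lemma cell_succE n i : i <= n -> cell_succ (cell n i) = cell n (i.+1 %% n.+1).
Proof. by rewrite /cell_succ /cell CodeSeq.codeK => ->. Qed.

Lemma cell_pred_le n i : i <= n -> cell_pred n i <= n.
Proof. by case: i => //= i /ltnW. Qed.

Lemma cell_succ_pred n i : i <= n -> cell_succ (cell n (cell_pred n i)) = cell n i.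
Proof.
move=> le_in; rewrite cell_succE ?cell_pred_le //; congr cell.
case: i le_in => [|i] /= lt_in; first by rewrite modnn.
by rewrite modn_small // ltnS.
Qed.

Lemma cell_succ_inv w n i : i <= n -> cell_succ w = cell n i -> w = cell n (cell_pred n i).
Proof.
move=> le_in; have dec_cell v : v = cell n i -> CodeSeq.decode v = [:: n; i].
  by move=> ->; apply: CodeSeq.codeK.
have def_w s : CodeSeq.decode w = s -> w = CodeSeq.code s.
  by move=> <-; rewrite CodeSeq.decodeK.
rewrite /cell_succ; case dec_w: (CodeSeq.decode w) => [|a [|b [|c s]]];
  try by move=> /dec_cell; rewrite dec_w.
have [le_ba /cell_inj[<- <-]|lt_ab /dec_cell] := leqP b a; last first.
  by rewrite dec_w => -[eq_a eq_b]; move: lt_ab; rewrite eq_a eq_b ltnNge le_in.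
rewrite (def_w _ dec_w); congr CodeSeq.code; congr [:: a; _].
move: le_ba; rewrite leq_eqVlt => /orP[/eqP->|lt_ba]; first by rewrite modnn.
by rewrite modn_small // ltnS.
Qed.

Definition edge (j : nat) : fact := (0, [:: j; cell_succ j]).

Lemma edge_inj : injective edge.
Proof. by move=> j j' [->]. Qed.

Definition graph_schema : schema := [:: 2].

Definition bits_graph (m : nat) : instance :=
  [fset f in [seq edge j | j <- iota 0 m & bit j m]]%fset.

Lemma bits_graphP m f : reflect (exists2 j, bit j m & f = edge j) (f \in bits_graph m).
Proof.
rewrite in_fset; apply: (iffP mapP) => -[j].
  by rewrite mem_filter => /andP[bjm _] ->; exists j.
by move=> bjm ->; exists j; rewrite // mem_filter bjm mem_iota add0n bit_lt.
Qed.

Lemma edge_in_bits_graph j m : (edge j \in bits_graph m) = bit j m.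
Proof. by apply/bits_graphP/idP => [[j' bjm /edge_inj ->]|bjm] //; exists j. Qed.

Lemma bits_graph_inj : injective bits_graph.
Proof.
by move=> m m' eq_m; apply: bit_inj => j; rewrite -!edge_in_bits_graph eq_m.
Qed.

Lemma bits_graph_over m : inst_over graph_schema (bits_graph m).
Proof. by move=> f /bits_graphP[j _ ->]. Qed.

Definition closed_formula : formula :=
  FAnd (FRel 0 [:: TVar 0; TVar 1])
    (FAll 2 (FAll 3 (FOr (FNot (FRel 0 [:: TVar 2; TVar 3]))
                         (FEx 4 (FRel 0 [:: TVar 4; TVar 2]))))).

Definition closed_view (D : instance) : instance :=
  apply_view graph_schema [:: closed_formula] D.

Definition closed_graph (D : instance) : bool :=
  all (fun u => all (fun v => ((0, [:: u; v]) \notin D) ||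
     has (fun w => (0, [:: w; u]) \in D) (adom D)) (adom D)) (adom D).

Lemma closed_graphP D :
  reflect (forall u v, (0, [:: u; v]) \in D -> exists w, (0, [:: w; u]) \in D)
          (closed_graph D).
Proof.
apply: (iffP allP) => [closedD u v Duv|closedD u _].
  have [u_adom v_adom] : u \in adom D /\ v \in adom D.
    by split; apply/adomP; exists (0, [:: u; v]); rewrite ?inE ?eqxx ?orbT.
  move/allP: (closedD u u_adom) => /(_ v v_adom); rewrite Duv /=.
  by case/hasP=> w _ Dwu; exists w.
apply/allP => v _; have [/(closedD u v)[w Dwu]|] //= := boolP (_ \in D).
by apply/hasP; exists w => //; apply/adomP; exists (0, [:: w; u]); rewrite ?inE ?eqxx.
Qed.

Lemma in_closed_view D f :
  inst_over graph_schema D -> (f \in closed_view D) = (f \in D) && closed_graph D.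
Proof.
have view_domE : view_dom [:: closed_formula] D 0 = adom D by rewrite /view_dom cats0.
have sat_closed nu : sat (adom D) D nu (view_formula [:: closed_formula] 0)
    = ((0, [:: nu 0; nu 1]) \in D) && closed_graph D by [].
move=> D_over; apply/apply_viewP/idP => [[r [a [-> lt_r1 + sat_a]]]|/andP[Df closedD]].
  move: lt_r1 sat_a; rewrite ltnS leqn0 => /eqP->; rewrite view_domE sat_closed mem_tuples.
  by case: a => [|x [|y []]].
have /andP[/= /[!ltnS] /[!leqn0] /eqP r0 /eqP size_a] := D_over f Df.
case: f Df r0 size_a => r a /= Df r0 size_a; subst r.
exists 0, a; rewrite view_domE; split=> //.
  rewrite mem_tuples size_a eqxx /=; apply/allP => x xa.
  by apply/adomP; exists (0, a).
by rewrite sat_closed; case: a size_a Df => [|x [|y []]] //= _ ->.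
Qed.

Lemma closed_cycle_pred m n i : closed_graph (bits_graph m) -> i <= n ->
  bit (cell n i) m -> bit (cell n (cell_pred n i)) m.
Proof.
move=> /closed_graphP closedD le_in bim.
have /closedD[w] : edge (cell n i) \in bits_graph m by rewrite edge_in_bits_graph.
case/bits_graphP=> j bjm [_ succ_j].
by rewrite -(cell_succ_inv le_in (esym succ_j)).
Qed.

Lemma closed_cycle_all m n i : closed_graph (bits_graph m) -> i <= n ->
  bit (cell n i) m -> forall t, t <= n -> bit (cell n t) m.
Proof.
move=> closedD le_in bim.
have down k : k <= n -> bit (cell n k) m -> forall t, t <= k -> bit (cell n t) m.
  elim: k => [|k IHk] le_kn bkm t; first by rewrite leqn0 => /eqP->.
  rewrite leq_eqVlt => /orP[/eqP->//|]; rewrite ltnS; apply: IHk; first exact: ltnW.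
  exact: (closed_cycle_pred closedD le_kn bkm).
have b0 := down i le_in bim 0 (leq0n i).
by move=> t le_tn; apply: (down n) => //; apply: (closed_cycle_pred closedD (leq0n n) b0).
Qed.

Definition cycle_cells (n : nat) : seq nat := [seq cell n i | i <- iota 0 n.+1].

Definition cycle_code (n : nat) : nat := \sum_(j <- cycle_cells n) 2 ^ j.

Lemma cycle_cells_uniq n : uniq (cycle_cells n).
Proof. by rewrite map_inj_in_uniq ?iota_uniq // => i i' _ _ /cell_inj[]. Qed.

Lemma size_cycle_cells n : size (cycle_cells n) = n.+1.
Proof. by rewrite size_map size_iota. Qed.

Lemma cycle_cellsP n j : reflect (exists2 i, i <= n & j = cell n i) (j \in cycle_cells n).
Proof.
apply: (iffP mapP) => -[i]; first by rewrite mem_iota add0n ltnS => le_in ->; exists i.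
by move=> le_in ->; exists i; rewrite // mem_iota add0n ltnS.
Qed.

Lemma bit_cycle_code n j : bit j (cycle_code n) = (j \in cycle_cells n).
Proof. by rewrite bit_sum_pow ?cycle_cells_uniq. Qed.

Lemma closed_cycle_code n : closed_graph (bits_graph (cycle_code n)).
Proof.
apply/closed_graphP => u v /bits_graphP[j]; rewrite bit_cycle_code.
case/cycle_cellsP=> i le_in -> [-> _]; exists (cell n (cell_pred n i)).
rewrite -(cell_succ_pred le_in) -/(edge _) edge_in_bits_graph bit_cycle_code.
by apply/cycle_cellsP; exists (cell_pred n i); rewrite ?cell_pred_le.
Qed.

Lemma closed_view_cycle_code n :
  closed_view (bits_graph (cycle_code n)) = bits_graph (cycle_code n).
Proof.
apply/fsetP => f; rewrite in_closed_view ?closed_cycle_code ?andbT //.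
exact: bits_graph_over.
Qed.

Section Counterexample.
Local Open Scope classical_set_scope.
Local Open Scope ring_scope.

Section GeometricBits.

Definition geom (m : nat) : R := ((2 ^ m.+1)%:R)^-1.

Lemma geom_gt0 m : 0 < geom m.
Proof. by rewrite invr_gt0 ltr0n expn_gt0. Qed.

Let geom_ge0 m : setT m -> 0 <= geom m.
Proof. by move=> _; apply/ltW/geom_gt0. Qed.

Lemma esum_geom : (\esum_(m in setT) (geom m)%:E = 1)%E.
Proof.
rewrite -nneseries_esumT => [|m]; last by rewrite lee_fin geom_ge0.
have := @cvg_geometric_eseries_half R 1 0; rewrite expr0 divr1.
rewrite (_ : (fun k => _) = (fun k => (geom k)%:E)) => [/cvg_lim->//|].
by apply/funext => k; rewrite div1r addn1.
Qed.

Local Notation gp := (prob setT geom).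

Definition bit_odds (j : nat) : R := ((2 ^ (2 ^ j))%:R)^-1.

Lemma geomD_pow m j : geom (m + 2 ^ j)%N = bit_odds j * geom m.
Proof. by rewrite /geom /bit_odds -invfM -natrM -expnD addnS addnC. Qed.

(* [m |-> m + 2 ^ j] maps the numbers with bit [j] unset onto those with bit [j] set. *)
Lemma prob_geom_bit (Q : set nat) j : (forall m, ~~ bit j m -> Q (m + 2 ^ j)%N <-> Q m) ->
  gp [set m | Q m /\ bit j m] = bit_odds j * gp [set m | Q m /\ ~~ bit j m].
Proof.
move=> Q_flip; apply: EFin_inj; rewrite EFinM -!(esum_prob geom_ge0 esum_geom) !setTI.
rewrite (reindex_esum [set m | Q m /\ ~~ bit j m] _ (fun m => (m + 2 ^ j)%N)).
  rewrite -esumZl_nat ?invr_ge0 ?ler0n // => [|m]; last exact: geom_ge0.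
  by apply: eq_esum => m _; rewrite geomD_pow.
split=> [m [Qm bjm]|m m' _ _|m [Qm /bit_set_pow[m' def_m bjm']]].
- by split; [apply/Q_flip | rewrite bitD_pow ?eqxx].
- exact: addIn.
- by exists m'; rewrite -?def_m //; split=> //; apply/Q_flip; rewrite -?def_m.
Qed.

Definition bits_set (J : seq nat) : set nat := [set m | all (bit^~ m) J].

Lemma bits_set_nil : bits_set [::] = setT.
Proof. exact/seteqP. Qed.

Lemma bits_set_cons j J : bits_set (j :: J) = [set m | bits_set J m /\ bit j m].
Proof. by apply/seteqP; split=> m /=; rewrite /bits_set /= andbC => /andP. Qed.

Lemma prob_bits_set_cons j J : j \notin J ->
  gp (bits_set (j :: J)) = gp (bits_set J) * gp (bits_set [:: j]).
Proof.
have ratio J' : j \notin J' ->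
    gp (bits_set (j :: J')) = bit_odds j * gp [set m | bits_set J' m /\ ~~ bit j m].
  move=> jJ'; rewrite bits_set_cons prob_geom_bit // => m bjm.
  rewrite /bits_set /= (@eq_in_all _ _ (bit^~ m)) // => i iJ' /=; rewrite bitD_pow //.
  by case: eqP iJ' => // -> /(negP jJ').
have split_j J' : gp (bits_set J') =
    gp (bits_set (j :: J')) + gp [set m | bits_set J' m /\ ~~ bit j m].
  rewrite bits_set_cons (prob_split geom_ge0 esum_geom _ [set m | bit j m]).
  by congr (_ + _); apply: prob_ext => m _; split=> -[] // ? /negP.
move=> jJ; have := split_j [::]; rewrite (split_j J) !ratio //.
rewrite bits_set_nil (prob_setT esum_geom).
set t := bit_odds j; set p0 := gp _; set pJ := gp _ => total.
by rewrite -[LHS]mulr1 total mulrDr mulrDl [pJ * (t * p0)]mulrCA [t * (pJ * p0)]mulrA.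
Qed.

End GeometricBits.

Definition graph_worlds : set instance := range bits_graph.

Definition graph_prob (D : instance) : R := geom (xget 0%N [set m | bits_graph m = D]).

Lemma graph_prob_bits m : graph_prob (bits_graph m) = geom m.
Proof.
rewrite /graph_prob; congr geom; apply: bits_graph_inj.
exact: (@xgetI _ 0%N [set m' | bits_graph m' = bits_graph m] m).
Qed.

Lemma esum_graph_worlds E :
  (\esum_(D in graph_worlds `&` E) (graph_prob D)%:E =
   \esum_(m in [set m | E (bits_graph m)]) (geom m)%:E)%E.
Proof.
have -> : graph_worlds `&` E = bits_graph @` [set m | E (bits_graph m)].
  by apply/seteqP; split=> [D [[m _ <-] ED]|D [m Em <-]]; [exists m | split=> //; exists m].
rewrite esum_image => [|m m' _ _]; last exact: bits_graph_inj.
by apply: eq_esum => m _; rewrite graph_prob_bits.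
Qed.

Lemma prob_graph_worlds E :
  prob graph_worlds graph_prob E = prob setT geom [set m | E (bits_graph m)].
Proof. by rewrite /prob setTI esum_graph_worlds. Qed.

Lemma graph_worlds_pdb : is_pdb graph_schema graph_worlds graph_prob.
Proof.
split=> //; first by exists (bits_graph 0), 0%N.
- by move=> _ [m _ <-]; apply: bits_graph_over.
- by move=> _ [m _ <-]; rewrite graph_prob_bits ltW ?geom_gt0.
- by rewrite -(setIT graph_worlds) esum_graph_worlds -esum_geom.
Qed.

Definition edge_src (f : fact) : nat := head 0%N f.2.

Lemma graph_fact_edge f : pdb_facts graph_worlds graph_prob f -> f = edge (edge_src f).
Proof. by case=> _ [[m _ <-] _ /bits_graphP[j _ ->]]. Qed.

Lemma prob_graph_edges (F : seq fact) : (forall f, f \in F -> f = edge (edge_src f)) ->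
  prob graph_worlds graph_prob [set D | all (fun f => f \in D) F]
  = prob setT geom (bits_set (map edge_src F)).
Proof.
move=> F_edges; rewrite prob_graph_worlds; congr (prob _ _ _).
have eq_all m : all (fun f => f \in bits_graph m) F = all (preim edge_src (bit^~ m)) F.
  by apply: eq_in_all => f /F_edges def_f; rewrite /= {1}def_f edge_in_bits_graph.
by apply/seteqP; split=> m; rewrite /bits_set /= all_map eq_all.
Qed.

Lemma graph_worlds_BID : is_BID graph_schema graph_worlds graph_prob.
Proof.
split; first exact: graph_worlds_pdb.
exists id; split=> [F PF|f f' _ _ neq /neq//]; rewrite map_id.
suff : uniq F -> prob graph_worlds graph_prob [set D | all (fun f => f \in D) F] =
  \prod_(f <- F) prob graph_worlds graph_prob [set D | f \in D] by [].
elim: F PF => [|f F IHF] PF.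
  by rewrite big_nil prob_graph_edges //= bits_set_nil (prob_setT esum_geom).
case/andP=> fF F_uniq; have edges g : g \in f :: F -> g = edge (edge_src g).
  by move/PF/graph_fact_edge.
have f_event : prob graph_worlds graph_prob [set D | f \in D] =
    prob setT geom (bits_set [:: edge_src f]).
  rewrite -(@prob_graph_edges [:: f]) => [|g /[!inE] /eqP->]; last exact/edges/mem_head.
  by apply: prob_ext => D _ /=; rewrite andbT.
rewrite big_cons -IHF // => [|g Fg]; last by apply: PF; rewrite inE Fg orbT.
rewrite f_event !prob_graph_edges // => [|g Fg]; last by apply: edges; rewrite inE Fg orbT.
rewrite /= prob_bits_set_cons 1?mulrC //; apply/mapP=> -[g Fg eq_src].
have gfF : g \in f :: F by rewrite inE Fg orbT.
by move: fF; rewrite (edges f (mem_head _ _)) eq_src -(edges g gfF) Fg.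
Qed.

Definition closed_worlds : set instance := closed_view @` graph_worlds.

Definition closed_prob (D' : instance) : R :=
  Pr graph_worlds graph_prob [set D | closed_view D = D'].

Lemma closed_worlds_cycle V n i :
  closed_worlds V -> edge (cell n 0) \in V -> (i <= n)%N -> edge (cell n i) \in V.
Proof.
case=> _ [m _ <-] <- e0m le_in; move: e0m.
rewrite !in_closed_view ?edge_in_bits_graph; try exact: bits_graph_over.
by case/andP=> b0m closed_m; rewrite closed_m (closed_cycle_all closed_m (leq0n n) b0m).
Qed.

Lemma closed_worlds_cycle_code n : closed_worlds (bits_graph (cycle_code n)).
Proof.
exists (bits_graph (cycle_code n)); last exact: closed_view_cycle_code.
by exists (cycle_code n).
Qed.

Lemma closed_prob_cycle_code n : 0 < closed_prob (bits_graph (cycle_code n)).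
Proof.
rewrite (lt_le_trans (geom_gt0 (cycle_code n))) // -graph_prob_bits.
apply: (mass_le_prob (pdb_ge0 graph_worlds_pdb) (pdb_sum1 graph_worlds_pdb)).
  by exists (cycle_code n).
exact: closed_view_cycle_code.
Qed.

Lemma closed_FO_BID : FO_BID graph_schema closed_worlds closed_prob.
Proof.
exists graph_schema, graph_worlds, graph_prob, [:: closed_formula].
by split=> //; [exact: graph_worlds_BID | split=> // -[]].
Qed.

Lemma closed_not_UCQ_BID : ~ UCQ_BID graph_schema closed_worlds closed_prob.
Proof.
case=> S [Dom [P [Phi [P_BID [_ _ Phi_view] [closed_img closed_probE]]]]].
have Phi_ucq r : (r < size graph_schema)%N -> is_ucq (view_formula Phi r).
  by case/Phi_view/and3P.
have [N avoid] := ucq_view_BID_avoid 0 P_BID Phi_ucq.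
have [P_pdb _] := P_BID.
pose X := bits_graph (cycle_code N).
have PX : 0 < Pr Dom P [set D | apply_view graph_schema Phi D = X].
  rewrite -closed_probE; last exact: closed_worlds_cycle_code.
  exact: closed_prob_cycle_code.
have [D [DomD DX PD]] := prob_gt0 (pdb_ge0 P_pdb) (pdb_sum1 P_pdb) PX.
have e0D : edge (cell N 0) \in apply_view graph_schema Phi D.
  by rewrite DX edge_in_bits_graph bit_cycle_code; apply/cycle_cellsP; exists 0%N.
have lt_N : (N < size (cycle_cells N))%N by rewrite size_cycle_cells.
have [_ /cycle_cellsP[i le_iN ->] [W [DomW _ e0W avoidW]]] :=
  avoid D _ _ DomD PD e0D (cycle_cells_uniq N) lt_N.
have W_img : closed_worlds (apply_view graph_schema Phi W) by rewrite closed_img; exists W.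
by have /avoidW := closed_worlds_cycle W_img e0W le_iN; rewrite mem_head.
Qed.

End Counterexample.

Lemma UCQ_BID_sub_FO_BID S' (Dom' : set instance) P' :
  UCQ_BID S' Dom' P' -> FO_BID S' Dom' P'.
Proof.
case=> S [Dom [P [Phi [P_BID [size_S' size_Phi Phi_ucq] img]]]].
exists S, Dom, P, Phi; split=> //; split=> // r lt_r.
by case/and3P: (Phi_ucq r lt_r) => -> ->.
Qed.

Theorem proposition7p14 :
  (forall (S' : schema) (Dom' : classical_sets.set instance) (P' : instance -> Rdefinitions.R),
      UCQ_BID S' Dom' P' -> FO_BID S' Dom' P') /\
  (exists (S' : schema) (Dom' : classical_sets.set instance) (P' : instance -> Rdefinitions.R),
      FO_BID S' Dom' P' /\ ~ UCQ_BID S' Dom' P').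
Proof.
split=> [S' Dom' P'|]; first exact: UCQ_BID_sub_FO_BID.
exists graph_schema, closed_worlds, closed_prob.
by split; [exact: closed_FO_BID | exact: closed_not_UCQ_BID].
Qed.
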